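(* Let $L$ be a label set containing $a$, and let $\mathcal{D}$ be the category of finite rooted $L$-labeled transition systems with root-preserving, label-preserving homomorphisms. Call a sieve $S$ on an object $G$ naive-sim-covering if for every finite rooted $L$-labeled tree $T$ admitting a homomorphism $T\to G$, some homomorphism $T\to G$ belongs to $S$. Then this covering predicate satisfies the maximality and transitivity axioms of a Grothendieck topology but not the stability (pullback) axiom. Explicitly: let $\mathrm{traceLTS}[a]$ have vertices $0$ (root) and $1$ with edge $0\xrightarrow{a}1$; let $\mathrm{fanLTS}[a,a]$ have vertices $0$ (root), $1$, $2$ with edges $0\xrightarrow{a}1$ and $0\xrightarrow{a}2$; let $f_R,f_L:\mathrm{traceLTS}[a]\to\mathrm{fanLTS}[a,a]$ send $1$ to $2$ and to $1$ respectively. The sieve $S$ on $\mathrm{fanLTS}[a,a]$ generated by $f_R$ is naive-sim-covering, while its pullback $f_L^*(S)$ on $\mathrm{traceLTS}[a]$ is not naive-sim-covering.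
   Context: A sieve on $G$ is a set of morphisms with codomain $G$ closed under precomposition; the pullback $f^*(S)$ along $f:H\to G$ is $\{g : f\circ g\in S\}$. The Grothendieck topology axioms: the maximal sieve covers (maximality); covering sieves are stable under pullback (stability); and if $S$ covers and $R$ is a sieve such that $f^*(R)$ covers for every $f\in S$ then $R$ covers (transitivity). *)

From mathcomp Require Import all_boot.
Set Implicit Arguments. Unset Strict Implicit. Unset Printing Implicit Defensive.

Section LTSDefs.
Variable L : eqType.

Record LTS := MkLTS {
  st : finType;
  root : st;
  edges : seq (st * L * st)
}.

Record Hom (G H : LTS) := MkHom {
  hfun :> st G -> st H;
  hroot : hfun (root G) = root H;
  hedge : all (fun e => (hfun e.1.1, e.1.2, hfun e.2) \in edges H) (edges G)
}.

Lemma comp_root (G H K : LTS) (f : Hom H K) (g : Hom G H) :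
  (f \o g) (root G) = root K.
Proof. by rewrite /= hroot hroot. Qed.

Lemma comp_edge (G H K : LTS) (f : Hom H K) (g : Hom G H) :
  all (fun e => ((f \o g) e.1.1, e.1.2, (f \o g) e.2) \in edges K) (edges G).
Proof.
apply/allP => e eG; have /allP := hedge g; move/(_ e eG) => eH.
by have /allP := hedge f; move/(_ _ eH).
Qed.

Definition comp (G H K : LTS) (f : Hom H K) (g : Hom G H) : Hom G K :=
  MkHom (comp_root f g) (comp_edge f g).

Definition sieve_pred (G : LTS) := forall H : LTS, Hom H G -> Prop.

Definition is_sieve (G : LTS) (S : sieve_pred G) : Prop :=
  forall (H : LTS) (f : Hom H G), S H f ->
    forall (K : LTS) (g : Hom K H), S K (comp f g).

Definition maximal_sieve (G : LTS) : sieve_pred G := fun _ _ => True.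

Definition pullback (G H : LTS) (f : Hom H G) (S : sieve_pred G) : sieve_pred H :=
  fun K g => S K (comp f g).

Definition gen_sieve (G H : LTS) (f : Hom H G) : sieve_pred G :=
  fun K g => exists h : Hom K H, g = comp f h.

Definition succ (T : LTS) : rel (st T) :=
  fun x y => has (fun e => (e.1.1 == x) && (e.2 == y)) (edges T).

Definition is_tree (T : LTS) : Prop :=
  [/\ forall x l, (x, l, root T) \notin edges T,
      forall y, y != root T ->
        exists x l, (x, l, y) \in edges T /\
          forall x' l', (x', l', y) \in edges T -> x' = x /\ l' = l
    & forall y, connect (@succ T) (root T) y].

Definition naive_sim_covering (G : LTS) (S : sieve_pred G) : Prop :=
  forall T : LTS, is_tree T -> inhabited (Hom T G) ->
    exists h : Hom T G, S T h.

End LTSDefs.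
Arguments maximal_sieve : clear implicits.

Section Examples.
Variables (L : eqType) (a : L).

Definition traceLTS : LTS L :=
  @MkLTS L 'I_2 ord0 [:: (ord0, a, ord_max)].

Definition fanLTS : LTS L :=
  @MkLTS L 'I_3 ord0
    [:: (ord0, a, (inord 1 : 'I_3)); (ord0, a, (inord 2 : 'I_3))].

Definition fR_fun (i : 'I_2) : 'I_3 := if i == ord0 then ord0 else inord 2.
Definition fL_fun (i : 'I_2) : 'I_3 := if i == ord0 then ord0 else inord 1.

Lemma fR_root : fR_fun ord0 = ord0. Proof. by []. Qed.
Lemma fL_root : fL_fun ord0 = ord0. Proof. by []. Qed.

Lemma fR_edge : all (fun e => (fR_fun e.1.1, e.1.2, fR_fun e.2) \in
                     [:: ((ord0 : 'I_3), a, (inord 1 : 'I_3)); (ord0, a, inord 2)])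
                  [:: ((ord0 : 'I_2), a, (ord_max : 'I_2))].
Proof. by rewrite /= !inE eqxx !orbT. Qed.

Lemma fL_edge : all (fun e => (fL_fun e.1.1, e.1.2, fL_fun e.2) \in
                     [:: ((ord0 : 'I_3), a, (inord 1 : 'I_3)); (ord0, a, inord 2)])
                  [:: ((ord0 : 'I_2), a, (ord_max : 'I_2))].
Proof. by rewrite /= !inE eqxx. Qed.

Definition fR : Hom traceLTS fanLTS := @MkHom L traceLTS fanLTS fR_fun fR_root fR_edge.
Definition fL : Hom traceLTS fanLTS := @MkHom L traceLTS fanLTS fL_fun fL_root fL_edge.

End Examples.

From Pilot Require Import Defs.
From mathcomp Require Import all_boot.
From Stdlib Require Import FunctionalExtensionality.
Set Implicit Arguments. Unset Strict Implicit. Unset Printing Implicit Defensive.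

(* Maximality and transitivity hold because a covering sieve only has to catch
   SOME homomorphism from each tree: for transitivity, take h : T -> G in S,
   then a k : T -> T with h \o k in R, using the identity of T as the witness
   that T maps to the domain of h.  Stability fails because every homomorphism
   into fanLTS[a,a] factors through f_R once both leaves are collapsed, whereas
   every endomorphism of the tree traceLTS[a] fixes its leaf, so f_L \o h
   reaches leaf 1 and can never equal f_R \o k, which reaches leaf 2. *)

Section Homomorphisms.
Variable L : eqType.

Lemma hom_ext (G H : LTS L) (f g : Hom G H) : f =1 g -> f = g.
Proof.
case: f g => f rf ef [g rg eg] /= /functional_extensionality fg; subst g.
by rewrite (eq_irrelevance rf rg) (bool_irrelevance ef eg).
Qed.

Lemma comp_homA (G H K M : LTS L) (f : Hom K M) (g : Hom H K) (h : Hom G H) :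
  Defs.comp f (Defs.comp g h) = Defs.comp (Defs.comp f g) h.
Proof. exact: hom_ext. Qed.

Lemma id_hom_edge (T : LTS L) :
  all (fun e => (id e.1.1, e.1.2, id e.2) \in edges T) (edges T).
Proof. by apply/allP => [[[x l] y]]. Qed.

Definition id_hom (T : LTS L) : Hom T T := MkHom (erefl (Defs.root T)) (id_hom_edge T).

End Homomorphisms.

Section NaiveSimTopology.
Variable L : eqType.

Lemma naive_sim_covering_maximal (G : LTS L) :
  naive_sim_covering (maximal_sieve L G).
Proof. by move=> T _ [h]; exists h. Qed.

Lemma naive_sim_covering_trans (G : LTS L) (S R : sieve_pred G) :
  naive_sim_covering S ->
  (forall (H : LTS L) (f : Hom H G), S H f -> naive_sim_covering (pullback f R)) ->
  naive_sim_covering R.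
Proof.
move=> covS covR T treeT homT.
have [h Sh] := covS T treeT homT.
have [k Rhk] := covR _ _ Sh T treeT (inhabits (id_hom T)).
by exists (Defs.comp h k).
Qed.

Lemma gen_sieve_is_sieve (G H : LTS L) (f : Hom H G) : is_sieve (gen_sieve f).
Proof. by move=> K _ [h ->] M g; exists (Defs.comp h g); rewrite comp_homA. Qed.

Lemma gen_sieve_covering (G H : LTS L) (f : Hom H G) :
  Hom G H -> naive_sim_covering (gen_sieve f).
Proof.
move=> r T _ [h]; exists (Defs.comp f (Defs.comp r h)).
by exists (Defs.comp r h).
Qed.

End NaiveSimTopology.

Section Counterexample.
Variables (L : eqType) (a : L).

Definition collapse_fun (i : 'I_3) : 'I_2 := if i == ord0 then ord0 else ord_max.

Lemma collapse_edge :
  all (fun e => (collapse_fun e.1.1, e.1.2, collapse_fun e.2) \in edges (traceLTS a))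
      (edges (fanLTS a)).
Proof. by rewrite /= !inE !xpair_eqE !eqxx /collapse_fun -!val_eqE /= !inordK. Qed.

Definition collapse : Hom (fanLTS a) (traceLTS a) := @MkHom L (fanLTS a) (traceLTS a) collapse_fun erefl collapse_edge.

Lemma traceLTS_is_tree : is_tree (traceLTS a).
Proof.
have leaf y : y != Defs.root (traceLTS a) -> y = ord_max.
  by case: y => [[|[|n]] //] lt_y _; apply/val_inj.
split=> [x l | y /leaf -> | y].
- by rewrite inE !xpair_eqE andbF.
- exists ord0, a; split=> [|x l]; first exact: mem_head.
  by rewrite inE !xpair_eqE => /andP[/andP[/eqP -> /eqP ->] _].
- have [-> | /leaf ->] := eqVneq y (Defs.root (traceLTS a)).
    exact: connect0.
  exact: connect1.
Qed.

Lemma trace_endo_leaf (h : Hom (traceLTS a) (traceLTS a)) : h ord_max = ord_max.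
Proof.
have /allP/(_ (ord0, a, ord_max)) := hedge h.
by rewrite !inE eqxx => /(_ isT); rewrite !xpair_eqE => /andP[_ /eqP].
Qed.

Lemma fL_fR_leaf_neq : fL a ord_max != fR a ord_max.
Proof. by rewrite -val_eqE /= !inordK. Qed.

Lemma gen_sieve_fR_covering : naive_sim_covering (gen_sieve (fR a)).
Proof. exact: gen_sieve_covering collapse. Qed.

Lemma pullback_fL_not_covering :
  ~ naive_sim_covering (pullback (fL a) (gen_sieve (fR a))).
Proof.
move=> cov.
have [h [k hk]] := cov _ traceLTS_is_tree (inhabits (id_hom _)).
have := congr1 (fun g : Hom (traceLTS a) (fanLTS a) => g ord_max) hk.
by rewrite /= !trace_endo_leaf; apply/eqP; exact: fL_fR_leaf_neq.
Qed.

End Counterexample.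

Theorem mainTheorem17 (L : eqType) (a : L) :
  (* maximality *)
  (forall G : LTS L, naive_sim_covering (maximal_sieve L G)) /\
  (* transitivity *)
  (forall (G : LTS L) (S R : sieve_pred G),
     is_sieve S -> is_sieve R ->
     naive_sim_covering S ->
     (forall (H : LTS L) (f : Hom H G), S H f ->
        naive_sim_covering (pullback f R)) ->
     naive_sim_covering R) /\
  (* failure of stability *)
  ~ (forall (G H : LTS L) (f : Hom H G) (S : sieve_pred G),
       is_sieve S -> naive_sim_covering S -> naive_sim_covering (pullback f S)) /\
  (* explicit counterexample *)
  is_sieve (gen_sieve (fR a)) /\
  naive_sim_covering (gen_sieve (fR a)) /\
  ~ naive_sim_covering (pullback (fL a) (gen_sieve (fR a))).
Proof.
split; first exact: naive_sim_covering_maximal.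
split; first by move=> G S R _ _; exact: naive_sim_covering_trans.
split.
  move=> stable; apply: (pullback_fL_not_covering (a := a)).
  by apply: stable; [exact: gen_sieve_is_sieve | exact: gen_sieve_fR_covering].
split; first exact: gen_sieve_is_sieve.
split; [exact: gen_sieve_fR_covering | exact: pullback_fL_not_covering].
Qed.
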